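(* Let $H$ be obtained from $E_{20}$ by adding a new vertex and joining it to four distinct vertices of $E_{20}$. Then $H$ contains $K_{3,4}$ or $F_4$ as a minor.
   Context: $E_{20}$ is the graph with vertex set $\{e^0,e^1_1,e^1_2,e^1_3,e^2,e^3_1,e^3_2,e^3_3,e^4\}$ and the 16 edges $e^0e^2$; $e^0e^1_i$ ($i=1,2,3$); $e^1_1e^1_2$, $e^1_2e^1_3$, $e^1_3e^1_1$; and, for $i=1,2,3$, $e^1_ie^3_i$, $e^2e^3_i$, $e^4e^3_i$. $F_4$ is the graph with vertex set $\{f^1,f^2\}\cup\{f^i_j: i\in\{1,2\}, j\in\{1,2,3,4\}\}$ and the 16 edges: for each $i\in\{1,2\}$, $f^if^i_1$, $f^if^i_2$, $f^if^i_4$, $f^i_3f^i_1$, $f^i_3f^i_2$, $f^i_3f^i_4$; and $f^1_jf^2_{5-j}$ for $j=1,2,3,4$. *)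

(* Finite simple graphs as symmetric irreflexive relations on finTypes. *)
From mathcomp Require Import all_boot.
Set Implicit Arguments. Unset Strict Implicit. Unset Printing Implicit Defensive.

Definition graph_of_edges (n : nat) (es : seq (nat * nat)) : rel 'I_n :=
  [rel i j | ((val i, val j) \in es) || ((val j, val i) \in es)].

(* E_20, with vertex numbering
   e^0 = 0, e^1_1 = 1, e^1_2 = 2, e^1_3 = 3, e^2 = 4,
   e^3_1 = 5, e^3_2 = 6, e^3_3 = 7, e^4 = 8. *)
Definition E20_edges : seq (nat * nat) :=
  [:: (0,4); (0,1); (0,2); (0,3);
      (1,2); (2,3); (3,1);
      (1,5); (2,6); (3,7);
      (4,5); (4,6); (4,7);
      (8,5); (8,6); (8,7)].
Definition E20 : rel 'I_9 := @graph_of_edges 9 E20_edges.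

(* F_4, with vertex numbering f^1 = 0, f^2 = 1, f^1_j = 1 + j, f^2_j = 5 + j (j = 1..4). *)
Definition F4_edges : seq (nat * nat) :=
  [:: (0,2); (0,3); (0,5); (4,2); (4,3); (4,5);
      (1,6); (1,7); (1,9); (8,6); (8,7); (8,9);
      (2,9); (3,8); (4,7); (5,6)].                  (* f^1_j f^2_{5-j} *)
Definition F4 : rel 'I_10 := @graph_of_edges 10 F4_edges.

Definition K34 : rel 'I_7 := [rel i j | (val i < 3) != (val j < 3)].

Definition H_of (S : {set 'I_9}) : rel (option 'I_9) :=
  fun x y => match x, y with
  | Some a, Some b => E20 a b
  | None, Some b => b \in S
  | Some a, None => a \in S
  | None, None => false
  end.

Definition is_minor (U V : finType) (F : rel U) (G : rel V) : Prop :=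
  exists B : U -> {set V},
    [/\ (forall u, B u != set0),
        (forall u u', u != u' -> [disjoint B u & B u']),
        (forall u x y, x \in B u -> y \in B u ->
           connect [rel a b | [&& a \in B u, b \in B u & G a b]] x y) &
        (forall u u', F u u' ->
           exists x y, [/\ x \in B u, y \in B u' & G x y])].

From mathcomp Require Import all_boot.
Set Implicit Arguments. Unset Strict Implicit. Unset Printing Implicit Defensive.

(* Since E_20 is fixed, the theorem is a finite statement about the 126 choices
   of the four neighbours of the new vertex.  For each of them we exhibit the
   branch sets of a minor: when all ten branch sets are singletons, F_4 is even
   a subgraph of H; otherwise seven branch sets give a K_{3,4} minor after
   contracting a few edges.  A branch set is shown to be connected by listing
   it so that every vertex is adjacent to an earlier one, which turns all the
   conditions on a minor model into a computable check. *)

Lemma eq_is_minor (U V : finType) (F : rel U) (G G' : rel V) :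
  G =2 G' -> is_minor F G -> is_minor F G'.
Proof.
move=> eqG [B [B_neq0 B_disj B_conn B_edge]].
exists B; split=> // [u x y xB yB|u u' Fuu'].
- rewrite -(eq_connect (e := [rel a b | [&& a \in B u, b \in B u & G a b]])).
    exact: B_conn.
  by move=> a b /=; rewrite eqG.
- have [x [y [xB yB Gxy]]] := B_edge u u' Fuu'.
  by exists x, y; rewrite -eqG.
Qed.

Section SpanningOrder.

Variables (V : finType) (G : rel V).
Hypothesis G_sym : symmetric G.

Definition induced_rel (A : {set V}) : rel V :=
  [rel a b | [&& a \in A, b \in A & G a b]].

Lemma induced_rel_sym A : symmetric (induced_rel A).
Proof. by move=> a b; rewrite /induced_rel /= G_sym andbCA. Qed.

Fixpoint attached_after (seen s : seq V) : bool :=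
  if s is x :: s' then has (G x) seen && attached_after (x :: seen) s' else true.

Definition spanning_order (s : seq V) : bool :=
  if s is x :: s' then attached_after [:: x] s' else true.

Lemma attached_after_connect (A : {set V}) r seen s :
    {subset seen <= A} -> {subset s <= A} ->
    {in seen, forall z, connect (induced_rel A) r z} ->
  attached_after seen s -> {in s, forall z, connect (induced_rel A) r z}.
Proof.
elim: s seen => [//|x s IHs] seen seenA xsA r_seen /=.
case/andP=> /hasP[y y_seen Gxy] attached_s.
have xA : x \in A by apply: xsA; exact: mem_head.
have r_x : connect (induced_rel A) r x.
  apply: connect_trans (r_seen y y_seen) (connect1 _).
  by rewrite /induced_rel /= seenA // xA G_sym.
move=> z; rewrite inE => /predU1P[-> //|z_s].
apply: (IHs (x :: seen) _ _ _ attached_s) z_s => [w|w w_s|w].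
- by rewrite inE => /predU1P[->|/seenA].
- by apply: xsA; rewrite inE w_s orbT.
- by rewrite inE => /predU1P[->|/r_seen].
Qed.

Lemma spanning_order_connect (A : {set V}) s :
  {subset s <= A} -> spanning_order s ->
  {in s &, forall x y, connect (induced_rel A) x y}.
Proof.
case: s => [//|r s] sA span.
have r_all : {in r :: s, forall z, connect (induced_rel A) r z}.
  move=> z; rewrite inE => /predU1P[-> //|].
  apply: (@attached_after_connect A r [:: r] s _ _ _ span).
  - by move=> w; rewrite inE => /eqP ->; apply: sA; exact: mem_head.
  - by move=> w w_s; apply: sA; rewrite inE w_s orbT.
  - by move=> w; rewrite inE => /eqP ->.
move=> x y x_s y_s; apply: connect_trans (r_all y y_s).
by rewrite (sym_connect_sym (induced_rel_sym A)) r_all.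
Qed.

End SpanningOrder.

Section MinorModel.

Variables (U V : finType) (F : rel U) (G : rel V) (us : seq U).
Hypotheses (G_sym : symmetric G) (us_full : forall u, u \in us).

Definition minor_model (B : U -> seq V) : bool :=
  [&& all (fun u => B u != [::]) us,
      all (fun u => all (fun u' => (u == u') || ~~ has (mem (B u')) (B u)) us) us,
      all (fun u => spanning_order G (B u)) us &
      all (fun u => all (fun u' => F u u' ==> has (fun x => has (G x) (B u')) (B u)) us) us].

Lemma minor_modelP B : minor_model B -> is_minor F G.
Proof.
case/and4P=> /allP B_nil /allP B_disj /allP B_span /allP B_edge.
exists (fun u => [set x in B u]); split=> [u|u u' neq_uu'|u x y|u u' Fuu'].
- apply/set0Pn; case: (B u) (B_nil u (us_full u)) => [//|x s _].
  by exists x; rewrite inE mem_head.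
- apply/pred0P=> x /=; rewrite !inE; apply/negbTE/andP=> -[x_u x_u'].
  have := allP (B_disj u (us_full u)) u' (us_full u').
  by rewrite (negbTE neq_uu') => /hasPn/(_ x x_u); rewrite /= x_u'.
- rewrite !inE; apply: (spanning_order_connect G_sym _ (B_span u (us_full u))).
  by move=> z; rewrite inE.
- have := implyP (allP (B_edge u (us_full u)) u' (us_full u')) Fuu'.
  by case/hasP=> x x_u /hasP[y y_u' Gxy]; exists x, y; rewrite !inE.
Qed.

End MinorModel.

(* [enum 'I_n] does not reduce under [vm_compute] (it goes through [insub],
   which matches on the opaque proof [idP]), hence this enumeration. *)
Fixpoint ord_seq (n : nat) : seq 'I_n :=
  if n is n'.+1 then ord0 :: map (lift ord0) (ord_seq n') else [::].

Lemma mem_ord_seq n (i : 'I_n) : i \in ord_seq n.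
Proof.
suff -> : ord_seq n = enum 'I_n by rewrite mem_enum.
by clear i; elim: n => [|n IHn]; rewrite ?enum_ord0 // enum_ordSl -IHn.
Qed.

Fixpoint bitseqs (n : nat) : seq (seq bool) :=
  if n is n'.+1 then [seq b :: s | b <- [:: true; false], s <- bitseqs n']
  else [:: [::]].

Lemma mem_bitseqs s : s \in bitseqs (size s).
Proof.
elim: s => [|b s IHs] //.
by apply/allpairsP; exists (b, s); case: b.
Qed.

(* Finite sets do not compute either ([finset] is locked), so the check ranges
   over the indicator bits of the neighbourhood of the new vertex. *)
Definition H_of_bits (s : seq bool) : rel (option 'I_9) :=
  fun x y => match x, y with
  | Some a, Some b => E20 a b
  | None, Some b => nth false s b
  | Some a, None => nth false s a
  | None, None => false
  end.

Lemma H_of_bits_sym s : symmetric (H_of_bits s).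
Proof. by case=> [a|] [b|] //=; rewrite /E20 /graph_of_edges /= orbC. Qed.

Definition bits_of (S : {set 'I_9}) : seq bool := [seq x \in S | x <- enum 'I_9].

Lemma size_bits_of S : size (bits_of S) = 9.
Proof. by rewrite size_map size_enum_ord. Qed.

Lemma count_bits_of S : count id (bits_of S) = #|S|.
Proof. by rewrite count_map cardE [enum_mem (mem S)]/enum_mem size_filter -enumT. Qed.

Lemma H_of_bits_of S : H_of_bits (bits_of S) =2 H_of S.
Proof.
have bitE (a : 'I_9) : nth false (bits_of S) a = (a \in S).
  by rewrite (nth_map a) ?size_enum_ord // nth_ord_enum.
by case=> [a|] [b|] //=; rewrite bitE.
Qed.

(* Certificates number the vertex [Some k] of H as k and the new vertex as 9. *)
Definition vertex (k : nat) : option 'I_9 := nth None [seq Some i | i <- ord_seq 9] k.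

Definition branch_sets n (L : seq (seq nat)) (u : 'I_n) : seq (option 'I_9) :=
  [seq vertex k | k <- nth [::] L u].

(* Each entry pairs a neighbourhood S of the new vertex with a minor model in
   H, listing every branch set in a spanning order: ten sets for F_4, seven
   for K_{3,4}. *)
Definition minor_table : seq (seq nat * seq (seq nat)) := [::
  ([:: 0; 1; 2; 3], [:: [:: 8]; [:: 9]; [:: 5]; [:: 6]; [:: 4]; [:: 7]; [:: 3]; [:: 0]; [:: 2]; [:: 1]]);
  ([:: 0; 1; 2; 4], [:: [:: 0]; [:: 8]; [:: 1]; [:: 9]; [:: 2]; [:: 3]; [:: 7]; [:: 6]; [:: 4]; [:: 5]]);
  ([:: 0; 1; 2; 5], [:: [:: 1]; [:: 8]; [:: 3]; [:: 0]; [:: 2]; [:: 9]; [:: 5]; [:: 6]; [:: 4]; [:: 7]]);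
  ([:: 0; 1; 2; 6], [:: [:: 2]; [:: 8]; [:: 3]; [:: 0]; [:: 1]; [:: 9]; [:: 6]; [:: 5]; [:: 4]; [:: 7]]);
  ([:: 0; 1; 2; 7], [:: [:: 3]; [:: 8]; [:: 1]; [:: 0]; [:: 9]; [:: 2]; [:: 6]; [:: 7]; [:: 4]; [:: 5]]);
  ([:: 0; 1; 2; 8], [:: [:: 0]; [:: 4]; [:: 1]; [:: 9]; [:: 2]; [:: 3]; [:: 7]; [:: 6]; [:: 8]; [:: 5]]);
  ([:: 0; 1; 3; 4], [:: [:: 0]; [:: 8]; [:: 1]; [:: 9]; [:: 3]; [:: 2]; [:: 6]; [:: 7]; [:: 4]; [:: 5]]);
  ([:: 0; 1; 3; 5], [:: [:: 1]; [:: 8]; [:: 2]; [:: 0]; [:: 3]; [:: 9]; [:: 5]; [:: 7]; [:: 4]; [:: 6]]);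
  ([:: 0; 1; 3; 6], [:: [:: 2]; [:: 8]; [:: 1]; [:: 0]; [:: 9]; [:: 3]; [:: 7]; [:: 6]; [:: 4]; [:: 5]]);
  ([:: 0; 1; 3; 7], [:: [:: 3]; [:: 8]; [:: 2]; [:: 0]; [:: 1]; [:: 9]; [:: 7]; [:: 5]; [:: 4]; [:: 6]]);
  ([:: 0; 1; 3; 8], [:: [:: 0]; [:: 4]; [:: 1]; [:: 9]; [:: 3]; [:: 2]; [:: 6]; [:: 7]; [:: 8]; [:: 5]]);
  ([:: 0; 1; 4; 5], [:: [:: 0]; [:: 8]; [:: 2]; [:: 9]; [:: 1]; [:: 3]; [:: 7]; [:: 5]; [:: 4]; [:: 6]]);
  ([:: 0; 1; 4; 6], [:: [:: 0]; [:: 8]; [:: 2]; [:: 9]; [:: 1]; [:: 3]; [:: 7]; [:: 5]; [:: 4]; [:: 6]]);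
  ([:: 0; 1; 4; 7], [:: [:: 0]; [:: 8]; [:: 2]; [:: 9]; [:: 1]; [:: 3]; [:: 7]; [:: 5]; [:: 4]; [:: 6]]);
  ([:: 0; 1; 4; 8], [:: [:: 0]; [:: 4]; [:: 2]; [:: 9]; [:: 1]; [:: 3]; [:: 7]; [:: 5]; [:: 8]; [:: 6]]);
  ([:: 0; 1; 5; 6], [:: [:: 0; 3; 7]; [:: 5]; [:: 6]; [:: 1; 2]; [:: 4]; [:: 8]; [:: 9]]);
  ([:: 0; 1; 5; 7], [:: [:: 0; 2; 6]; [:: 5]; [:: 7]; [:: 1; 3]; [:: 4]; [:: 8]; [:: 9]]);
  ([:: 0; 1; 5; 8], [:: [:: 0]; [:: 4]; [:: 2]; [:: 9]; [:: 1]; [:: 3]; [:: 7]; [:: 5]; [:: 8]; [:: 6]]);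
  ([:: 0; 1; 6; 7], [:: [:: 0; 1; 5]; [:: 6]; [:: 7]; [:: 2; 3]; [:: 4]; [:: 8]; [:: 9]]);
  ([:: 0; 1; 6; 8], [:: [:: 0]; [:: 4]; [:: 2]; [:: 9]; [:: 1]; [:: 3]; [:: 7]; [:: 5]; [:: 8]; [:: 6]]);
  ([:: 0; 1; 7; 8], [:: [:: 0]; [:: 4]; [:: 2]; [:: 9]; [:: 1]; [:: 3]; [:: 7]; [:: 5]; [:: 8]; [:: 6]]);
  ([:: 0; 2; 3; 4], [:: [:: 0]; [:: 8]; [:: 1]; [:: 9]; [:: 2]; [:: 3]; [:: 7]; [:: 6]; [:: 4]; [:: 5]]);
  ([:: 0; 2; 3; 5], [:: [:: 1]; [:: 8]; [:: 2]; [:: 0]; [:: 9]; [:: 3]; [:: 7]; [:: 5]; [:: 4]; [:: 6]]);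
  ([:: 0; 2; 3; 6], [:: [:: 2]; [:: 8]; [:: 1]; [:: 0]; [:: 3]; [:: 9]; [:: 6]; [:: 7]; [:: 4]; [:: 5]]);
  ([:: 0; 2; 3; 7], [:: [:: 3]; [:: 8]; [:: 1]; [:: 0]; [:: 2]; [:: 9]; [:: 7]; [:: 6]; [:: 4]; [:: 5]]);
  ([:: 0; 2; 3; 8], [:: [:: 0]; [:: 4]; [:: 1]; [:: 9]; [:: 2]; [:: 3]; [:: 7]; [:: 6]; [:: 8]; [:: 5]]);
  ([:: 0; 2; 4; 5], [:: [:: 0]; [:: 8]; [:: 1]; [:: 9]; [:: 2]; [:: 3]; [:: 7]; [:: 6]; [:: 4]; [:: 5]]);
  ([:: 0; 2; 4; 6], [:: [:: 0]; [:: 8]; [:: 1]; [:: 9]; [:: 2]; [:: 3]; [:: 7]; [:: 6]; [:: 4]; [:: 5]]);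
  ([:: 0; 2; 4; 7], [:: [:: 0]; [:: 8]; [:: 1]; [:: 9]; [:: 2]; [:: 3]; [:: 7]; [:: 6]; [:: 4]; [:: 5]]);
  ([:: 0; 2; 4; 8], [:: [:: 0]; [:: 4]; [:: 1]; [:: 9]; [:: 2]; [:: 3]; [:: 7]; [:: 6]; [:: 8]; [:: 5]]);
  ([:: 0; 2; 5; 6], [:: [:: 0; 3; 7]; [:: 5]; [:: 6]; [:: 1; 2]; [:: 4]; [:: 8]; [:: 9]]);
  ([:: 0; 2; 5; 7], [:: [:: 2; 6]; [:: 5]; [:: 7]; [:: 0; 1; 3]; [:: 4]; [:: 8]; [:: 9]]);
  ([:: 0; 2; 5; 8], [:: [:: 0]; [:: 4]; [:: 1]; [:: 9]; [:: 2]; [:: 3]; [:: 7]; [:: 6]; [:: 8]; [:: 5]]);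
  ([:: 0; 2; 6; 7], [:: [:: 0; 1; 5]; [:: 6]; [:: 7]; [:: 2; 3]; [:: 4]; [:: 8]; [:: 9]]);
  ([:: 0; 2; 6; 8], [:: [:: 0]; [:: 4]; [:: 1]; [:: 9]; [:: 2]; [:: 3]; [:: 7]; [:: 6]; [:: 8]; [:: 5]]);
  ([:: 0; 2; 7; 8], [:: [:: 0]; [:: 4]; [:: 1]; [:: 9]; [:: 2]; [:: 3]; [:: 7]; [:: 6]; [:: 8]; [:: 5]]);
  ([:: 0; 3; 4; 5], [:: [:: 0]; [:: 8]; [:: 1]; [:: 9]; [:: 3]; [:: 2]; [:: 6]; [:: 7]; [:: 4]; [:: 5]]);
  ([:: 0; 3; 4; 6], [:: [:: 0]; [:: 8]; [:: 1]; [:: 9]; [:: 3]; [:: 2]; [:: 6]; [:: 7]; [:: 4]; [:: 5]]);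
  ([:: 0; 3; 4; 7], [:: [:: 0]; [:: 8]; [:: 1]; [:: 9]; [:: 3]; [:: 2]; [:: 6]; [:: 7]; [:: 4]; [:: 5]]);
  ([:: 0; 3; 4; 8], [:: [:: 0]; [:: 4]; [:: 1]; [:: 9]; [:: 3]; [:: 2]; [:: 6]; [:: 7]; [:: 8]; [:: 5]]);
  ([:: 0; 3; 5; 6], [:: [:: 3; 7]; [:: 5]; [:: 6]; [:: 0; 1; 2]; [:: 4]; [:: 8]; [:: 9]]);
  ([:: 0; 3; 5; 7], [:: [:: 0; 2; 6]; [:: 5]; [:: 7]; [:: 1; 3]; [:: 4]; [:: 8]; [:: 9]]);
  ([:: 0; 3; 5; 8], [:: [:: 0]; [:: 4]; [:: 1]; [:: 9]; [:: 3]; [:: 2]; [:: 6]; [:: 7]; [:: 8]; [:: 5]]);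
  ([:: 0; 3; 6; 7], [:: [:: 0; 1; 5]; [:: 6]; [:: 7]; [:: 2; 3]; [:: 4]; [:: 8]; [:: 9]]);
  ([:: 0; 3; 6; 8], [:: [:: 0]; [:: 4]; [:: 1]; [:: 9]; [:: 3]; [:: 2]; [:: 6]; [:: 7]; [:: 8]; [:: 5]]);
  ([:: 0; 3; 7; 8], [:: [:: 0]; [:: 4]; [:: 1]; [:: 9]; [:: 3]; [:: 2]; [:: 6]; [:: 7]; [:: 8]; [:: 5]]);
  ([:: 0; 4; 5; 6], [:: [:: 0; 3; 7]; [:: 5]; [:: 6]; [:: 1; 2]; [:: 4]; [:: 8]; [:: 9]]);
  ([:: 0; 4; 5; 7], [:: [:: 0; 2; 6]; [:: 5]; [:: 7]; [:: 1; 3]; [:: 4]; [:: 8]; [:: 9]]);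
  ([:: 0; 4; 5; 8], [:: [:: 0; 1; 2; 3]; [:: 4]; [:: 8]; [:: 5]; [:: 6]; [:: 7]; [:: 9]]);
  ([:: 0; 4; 6; 7], [:: [:: 0; 1; 5]; [:: 6]; [:: 7]; [:: 2; 3]; [:: 4]; [:: 8]; [:: 9]]);
  ([:: 0; 4; 6; 8], [:: [:: 0; 1; 2; 3]; [:: 4]; [:: 8]; [:: 5]; [:: 6]; [:: 7]; [:: 9]]);
  ([:: 0; 4; 7; 8], [:: [:: 0; 1; 2; 3]; [:: 4]; [:: 8]; [:: 5]; [:: 6]; [:: 7]; [:: 9]]);
  ([:: 0; 5; 6; 7], [:: [:: 5]; [:: 6]; [:: 7]; [:: 0; 1; 2; 3]; [:: 4]; [:: 8]; [:: 9]]);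
  ([:: 0; 5; 6; 8], [:: [:: 0; 3; 7]; [:: 5]; [:: 6]; [:: 1; 2]; [:: 4]; [:: 8]; [:: 9]]);
  ([:: 0; 5; 7; 8], [:: [:: 0; 2; 6]; [:: 5]; [:: 7]; [:: 1; 3]; [:: 4]; [:: 8]; [:: 9]]);
  ([:: 0; 6; 7; 8], [:: [:: 0; 1; 5]; [:: 6]; [:: 7]; [:: 2; 3]; [:: 4]; [:: 8]; [:: 9]]);
  ([:: 1; 2; 3; 4], [:: [:: 1; 2]; [:: 3; 7; 8]; [:: 4]; [:: 0]; [:: 5]; [:: 6]; [:: 9]]);
  ([:: 1; 2; 3; 5], [:: [:: 1]; [:: 8]; [:: 2]; [:: 0]; [:: 3]; [:: 9]; [:: 5]; [:: 7]; [:: 4]; [:: 6]]);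
  ([:: 1; 2; 3; 6], [:: [:: 2]; [:: 8]; [:: 1]; [:: 0]; [:: 3]; [:: 9]; [:: 6]; [:: 7]; [:: 4]; [:: 5]]);
  ([:: 1; 2; 3; 7], [:: [:: 3]; [:: 8]; [:: 1]; [:: 0]; [:: 2]; [:: 9]; [:: 7]; [:: 6]; [:: 4]; [:: 5]]);
  ([:: 1; 2; 3; 8], [:: [:: 1; 5]; [:: 2; 6]; [:: 3; 7]; [:: 0]; [:: 4]; [:: 8]; [:: 9]]);
  ([:: 1; 2; 4; 5], [:: [:: 1]; [:: 8]; [:: 3]; [:: 0]; [:: 2]; [:: 9]; [:: 5]; [:: 6]; [:: 4]; [:: 7]]);
  ([:: 1; 2; 4; 6], [:: [:: 2]; [:: 8]; [:: 3]; [:: 0]; [:: 1]; [:: 9]; [:: 6]; [:: 5]; [:: 4]; [:: 7]]);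
  ([:: 1; 2; 4; 7], [:: [:: 0; 1; 5]; [:: 2; 6]; [:: 7]; [:: 3]; [:: 4]; [:: 8]; [:: 9]]);
  ([:: 1; 2; 4; 8], [:: [:: 0; 1; 2; 3]; [:: 4]; [:: 8]; [:: 5]; [:: 6]; [:: 7]; [:: 9]]);
  ([:: 1; 2; 5; 6], [:: [:: 1]; [:: 8]; [:: 3]; [:: 0]; [:: 2]; [:: 9]; [:: 5]; [:: 6]; [:: 4]; [:: 7]]);
  ([:: 1; 2; 5; 7], [:: [:: 1]; [:: 8]; [:: 3]; [:: 0]; [:: 2]; [:: 9]; [:: 5]; [:: 6]; [:: 4]; [:: 7]]);
  ([:: 1; 2; 5; 8], [:: [:: 1]; [:: 8]; [:: 3]; [:: 0]; [:: 2]; [:: 9]; [:: 5]; [:: 6]; [:: 4]; [:: 7]]);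
  ([:: 1; 2; 6; 7], [:: [:: 2]; [:: 8]; [:: 3]; [:: 0]; [:: 1]; [:: 9]; [:: 6]; [:: 5]; [:: 4]; [:: 7]]);
  ([:: 1; 2; 6; 8], [:: [:: 2]; [:: 8]; [:: 3]; [:: 0]; [:: 1]; [:: 9]; [:: 6]; [:: 5]; [:: 4]; [:: 7]]);
  ([:: 1; 2; 7; 8], [:: [:: 0; 1; 5]; [:: 2; 6]; [:: 7]; [:: 3]; [:: 4]; [:: 8]; [:: 9]]);
  ([:: 1; 3; 4; 5], [:: [:: 1]; [:: 8]; [:: 2]; [:: 0]; [:: 3]; [:: 9]; [:: 5]; [:: 7]; [:: 4]; [:: 6]]);
  ([:: 1; 3; 4; 6], [:: [:: 0; 1; 5]; [:: 3; 7]; [:: 6]; [:: 2]; [:: 4]; [:: 8]; [:: 9]]);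
  ([:: 1; 3; 4; 7], [:: [:: 3]; [:: 8]; [:: 2]; [:: 0]; [:: 1]; [:: 9]; [:: 7]; [:: 5]; [:: 4]; [:: 6]]);
  ([:: 1; 3; 4; 8], [:: [:: 0; 1; 2; 3]; [:: 4]; [:: 8]; [:: 5]; [:: 6]; [:: 7]; [:: 9]]);
  ([:: 1; 3; 5; 6], [:: [:: 1]; [:: 8]; [:: 2]; [:: 0]; [:: 3]; [:: 9]; [:: 5]; [:: 7]; [:: 4]; [:: 6]]);
  ([:: 1; 3; 5; 7], [:: [:: 1]; [:: 8]; [:: 2]; [:: 0]; [:: 3]; [:: 9]; [:: 5]; [:: 7]; [:: 4]; [:: 6]]);
  ([:: 1; 3; 5; 8], [:: [:: 1]; [:: 8]; [:: 2]; [:: 0]; [:: 3]; [:: 9]; [:: 5]; [:: 7]; [:: 4]; [:: 6]]);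
  ([:: 1; 3; 6; 7], [:: [:: 3]; [:: 8]; [:: 2]; [:: 0]; [:: 1]; [:: 9]; [:: 7]; [:: 5]; [:: 4]; [:: 6]]);
  ([:: 1; 3; 6; 8], [:: [:: 0; 1; 5]; [:: 3; 7]; [:: 6]; [:: 2]; [:: 4]; [:: 8]; [:: 9]]);
  ([:: 1; 3; 7; 8], [:: [:: 3]; [:: 8]; [:: 2]; [:: 0]; [:: 1]; [:: 9]; [:: 7]; [:: 5]; [:: 4]; [:: 6]]);
  ([:: 1; 4; 5; 6], [:: [:: 1; 3]; [:: 4]; [:: 6; 8]; [:: 0; 2]; [:: 5]; [:: 7]; [:: 9]]);
  ([:: 1; 4; 5; 7], [:: [:: 1; 2]; [:: 4]; [:: 7; 8]; [:: 0; 3]; [:: 5]; [:: 6]; [:: 9]]);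
  ([:: 1; 4; 5; 8], [:: [:: 0; 1; 2; 3]; [:: 4]; [:: 8]; [:: 5]; [:: 6]; [:: 7]; [:: 9]]);
  ([:: 1; 4; 6; 7], [:: [:: 0; 1; 5]; [:: 6]; [:: 7]; [:: 2; 3]; [:: 4]; [:: 8]; [:: 9]]);
  ([:: 1; 4; 6; 8], [:: [:: 0; 1; 2; 3]; [:: 4]; [:: 8]; [:: 5]; [:: 6]; [:: 7]; [:: 9]]);
  ([:: 1; 4; 7; 8], [:: [:: 0; 1; 2; 3]; [:: 4]; [:: 8]; [:: 5]; [:: 6]; [:: 7]; [:: 9]]);
  ([:: 1; 5; 6; 7], [:: [:: 5]; [:: 6]; [:: 7]; [:: 0; 1; 2; 3]; [:: 4]; [:: 8]; [:: 9]]);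
  ([:: 1; 5; 6; 8], [:: [:: 1]; [:: 3; 7; 8]; [:: 4; 6]; [:: 0]; [:: 2]; [:: 5]; [:: 9]]);
  ([:: 1; 5; 7; 8], [:: [:: 1]; [:: 2; 6; 8]; [:: 4; 7]; [:: 0]; [:: 3]; [:: 5]; [:: 9]]);
  ([:: 1; 6; 7; 8], [:: [:: 0; 1; 5]; [:: 6]; [:: 7]; [:: 2; 3]; [:: 4]; [:: 8]; [:: 9]]);
  ([:: 2; 3; 4; 5], [:: [:: 2; 3]; [:: 4]; [:: 5; 8]; [:: 0; 1]; [:: 6]; [:: 7]; [:: 9]]);
  ([:: 2; 3; 4; 6], [:: [:: 2]; [:: 8]; [:: 1]; [:: 0]; [:: 3]; [:: 9]; [:: 6]; [:: 7]; [:: 4]; [:: 5]]);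
  ([:: 2; 3; 4; 7], [:: [:: 3]; [:: 8]; [:: 1]; [:: 0]; [:: 2]; [:: 9]; [:: 7]; [:: 6]; [:: 4]; [:: 5]]);
  ([:: 2; 3; 4; 8], [:: [:: 0; 1; 2; 3]; [:: 4]; [:: 8]; [:: 5]; [:: 6]; [:: 7]; [:: 9]]);
  ([:: 2; 3; 5; 6], [:: [:: 2]; [:: 8]; [:: 1]; [:: 0]; [:: 3]; [:: 9]; [:: 6]; [:: 7]; [:: 4]; [:: 5]]);
  ([:: 2; 3; 5; 7], [:: [:: 3]; [:: 8]; [:: 1]; [:: 0]; [:: 2]; [:: 9]; [:: 7]; [:: 6]; [:: 4]; [:: 5]]);
  ([:: 2; 3; 5; 8], [:: [:: 2; 6]; [:: 3; 7]; [:: 5]; [:: 0; 1]; [:: 4]; [:: 8]; [:: 9]]);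
  ([:: 2; 3; 6; 7], [:: [:: 2]; [:: 8]; [:: 1]; [:: 0]; [:: 3]; [:: 9]; [:: 6]; [:: 7]; [:: 4]; [:: 5]]);
  ([:: 2; 3; 6; 8], [:: [:: 2]; [:: 8]; [:: 1]; [:: 0]; [:: 3]; [:: 9]; [:: 6]; [:: 7]; [:: 4]; [:: 5]]);
  ([:: 2; 3; 7; 8], [:: [:: 3]; [:: 8]; [:: 1]; [:: 0]; [:: 2]; [:: 9]; [:: 7]; [:: 6]; [:: 4]; [:: 5]]);
  ([:: 2; 4; 5; 6], [:: [:: 2; 3]; [:: 4]; [:: 5; 8]; [:: 0; 1]; [:: 6]; [:: 7]; [:: 9]]);
  ([:: 2; 4; 5; 7], [:: [:: 2; 6]; [:: 5]; [:: 7]; [:: 0; 1; 3]; [:: 4]; [:: 8]; [:: 9]]);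
  ([:: 2; 4; 5; 8], [:: [:: 0; 1; 2; 3]; [:: 4]; [:: 8]; [:: 5]; [:: 6]; [:: 7]; [:: 9]]);
  ([:: 2; 4; 6; 7], [:: [:: 1; 2]; [:: 4]; [:: 7; 8]; [:: 0; 3]; [:: 5]; [:: 6]; [:: 9]]);
  ([:: 2; 4; 6; 8], [:: [:: 0; 1; 2; 3]; [:: 4]; [:: 8]; [:: 5]; [:: 6]; [:: 7]; [:: 9]]);
  ([:: 2; 4; 7; 8], [:: [:: 0; 1; 2; 3]; [:: 4]; [:: 8]; [:: 5]; [:: 6]; [:: 7]; [:: 9]]);
  ([:: 2; 5; 6; 7], [:: [:: 5]; [:: 6]; [:: 7]; [:: 0; 1; 2; 3]; [:: 4]; [:: 8]; [:: 9]]);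
  ([:: 2; 5; 6; 8], [:: [:: 2]; [:: 3; 7; 8]; [:: 4; 5]; [:: 0]; [:: 1]; [:: 6]; [:: 9]]);
  ([:: 2; 5; 7; 8], [:: [:: 2; 6]; [:: 5]; [:: 7]; [:: 0; 1; 3]; [:: 4]; [:: 8]; [:: 9]]);
  ([:: 2; 6; 7; 8], [:: [:: 1; 5; 8]; [:: 2]; [:: 4; 7]; [:: 0]; [:: 3]; [:: 6]; [:: 9]]);
  ([:: 3; 4; 5; 6], [:: [:: 3; 7]; [:: 5]; [:: 6]; [:: 0; 1; 2]; [:: 4]; [:: 8]; [:: 9]]);
  ([:: 3; 4; 5; 7], [:: [:: 2; 3]; [:: 4]; [:: 5; 8]; [:: 0; 1]; [:: 6]; [:: 7]; [:: 9]]);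
  ([:: 3; 4; 5; 8], [:: [:: 0; 1; 2; 3]; [:: 4]; [:: 8]; [:: 5]; [:: 6]; [:: 7]; [:: 9]]);
  ([:: 3; 4; 6; 7], [:: [:: 1; 3]; [:: 4]; [:: 6; 8]; [:: 0; 2]; [:: 5]; [:: 7]; [:: 9]]);
  ([:: 3; 4; 6; 8], [:: [:: 0; 1; 2; 3]; [:: 4]; [:: 8]; [:: 5]; [:: 6]; [:: 7]; [:: 9]]);
  ([:: 3; 4; 7; 8], [:: [:: 0; 1; 2; 3]; [:: 4]; [:: 8]; [:: 5]; [:: 6]; [:: 7]; [:: 9]]);
  ([:: 3; 5; 6; 7], [:: [:: 5]; [:: 6]; [:: 7]; [:: 0; 1; 2; 3]; [:: 4]; [:: 8]; [:: 9]]);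
  ([:: 3; 5; 6; 8], [:: [:: 3; 7]; [:: 5]; [:: 6]; [:: 0; 1; 2]; [:: 4]; [:: 8]; [:: 9]]);
  ([:: 3; 5; 7; 8], [:: [:: 2; 6; 8]; [:: 3]; [:: 4; 5]; [:: 0]; [:: 1]; [:: 7]; [:: 9]]);
  ([:: 3; 6; 7; 8], [:: [:: 1; 5; 8]; [:: 3]; [:: 4; 6]; [:: 0]; [:: 2]; [:: 7]; [:: 9]]);
  ([:: 4; 5; 6; 7], [:: [:: 5]; [:: 6]; [:: 7]; [:: 0; 1; 2; 3]; [:: 4]; [:: 8]; [:: 9]]);
  ([:: 4; 5; 6; 8], [:: [:: 1; 5]; [:: 2; 6]; [:: 4; 7]; [:: 0]; [:: 3]; [:: 8]; [:: 9]]);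
  ([:: 4; 5; 7; 8], [:: [:: 1; 5]; [:: 3; 7]; [:: 4; 6]; [:: 0]; [:: 2]; [:: 8]; [:: 9]]);
  ([:: 4; 6; 7; 8], [:: [:: 2; 6]; [:: 3; 7]; [:: 4; 5]; [:: 0]; [:: 1]; [:: 8]; [:: 9]]);
  ([:: 5; 6; 7; 8], [:: [:: 5]; [:: 6]; [:: 7]; [:: 0; 1; 2; 3]; [:: 4]; [:: 8]; [:: 9]])].

Definition model_of (s : seq bool) : seq (seq nat) :=
  let S := [seq k <- iota 0 9 | nth false s k] in
  (nth ([::], [::]) minor_table (find (fun p => p.1 == S) minor_table)).2.

Lemma minor_table_correct :
  all (fun s => (count id s == 4) ==>
         minor_model K34 (H_of_bits s) (ord_seq 7) (branch_sets (model_of s))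
      || minor_model F4 (H_of_bits s) (ord_seq 10) (branch_sets (model_of s)))
    (bitseqs 9).
Proof. by vm_compute. Qed.

Theorem lemma4p6 (S : {set 'I_9}) :
  #|S| = 4 -> is_minor K34 (H_of S) \/ is_minor F4 (H_of S).
Proof.
move=> card_S.
have bits_S : bits_of S \in bitseqs 9 by rewrite -(size_bits_of S) mem_bitseqs.
have := allP minor_table_correct _ bits_S; rewrite count_bits_of card_S /=.
case/orP=> /minor_modelP model; [left|right];
  apply: eq_is_minor (H_of_bits_of S) (model (H_of_bits_sym _) (@mem_ord_seq _)).
Qed.
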